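(* Let $W,V$ be subspaces of $\mathbb{R}^n$ with $\mathbb{R}^n=W\oplus V^\perp$. Let $\mu\in\mathcal{P}_2(W)$ and $\nu\in\mathcal{P}_2(V)$ be Bessel probability measures with bounds $B_\mu>0$ and $B_\nu>0$ respectively, and let $\gamma\in\Gamma(\mu,\nu)$. Then the following are equivalent: (1) for all $\mathbf{f}\in W$, $\mathbf{f}=\int_{W\times V}\mathbf{x}\langle\mathbf{y},\mathbf{f}\rangle\,d\gamma(\mathbf{x},\mathbf{y})$; (2) for all $\mathbf{f}\in\mathbb{R}^n$, $\boldsymbol{\pi}_{WV^\perp}\mathbf{f}=\int_{W\times V}\mathbf{x}\langle\mathbf{y},\mathbf{f}\rangle\,d\gamma(\mathbf{x},\mathbf{y})$; (3) for all $\mathbf{f}\in\mathbb{R}^n$, $\boldsymbol{\pi}_{VW^\perp}\mathbf{f}=\int_{W\times V}\langle\mathbf{x},\mathbf{f}\rangle\mathbf{y}\,d\gamma(\mathbf{x},\mathbf{y})$; (4) for all $\mathbf{f},\mathbf{g}\in\mathbb{R}^n$, $\langle\boldsymbol{\pi}_{WV^\perp}\mathbf{f},\mathbf{g}\rangle=\int_{W\times V}\langle\mathbf{x},\mathbf{g}\rangle\langle\mathbf{y},\mathbf{f}\rangle\,d\gamma(\mathbf{x},\mathbf{y})$; (5) for all $\mathbf{f},\mathbf{g}\in\mathbb{R}^n$, $\langle\boldsymbol{\pi}_{VW^\perp}\mathbf{f},\mathbf{g}\rangle=\int_{W\times V}\langle\mathbf{x},\mathbf{f}\rangle\langle\mathbf{y},\mathbf{g}\rangle\,d\gamma(\mathbf{x},\mathbf{y})$.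 If any of these conditions holds, then $\mu$ and $\nu$ are probabilistic frames for $W$ and $V$ with lower bounds $\frac1{B_\nu}$ and $\frac1{B_\mu}$, respectively. Furthermore, in that case $\mu$ and $(\mathbf{P}_W)_\#\nu$ are dual probabilistic frames for $W$, and $(\mathbf{P}_V)_\#\mu$ and $\nu$ are dual probabilistic frames for $V$.
   Context: $\mathcal{P}_2(W)$ is the set of Borel probability measures on $W$ (viewed as measures on $\mathbb{R}^n$ concentrated on $W$) with finite second moment $M_2(\mu)=\int\|\mathbf{x}\|^2d\mu(\mathbf{x})$. $\Gamma(\mu,\nu)$ is the set of couplings: Borel probability measures on $W\times V$ with first marginal $\mu$ and second marginal $\nu$. $\mu\in\mathcal{P}_2(W)$ is a Bessel probability measure for $W$ with bound $B$ if $\int_W|\langle\mathbf{x},\mathbf{y}\rangle|^2d\mu(\mathbf{y})\le B\|\mathbf{x}\|^2$ for all $\mathbf{x}\in W$; it is a probabilistic frame for $W$ with bounds $0<A\le B$ if moreover $A\|\mathbf{x}\|^2\le\int_W|\langle\mathbf{x},\mathbf{y}\rangle|^2d\mu(\mathbf{y})$ for all $\mathbf{x}\in W$. $\mathbf{P}_W$ is the orthogonal projection onto $W$; $\boldsymbol{\pi}_{WV^\perp}$ is the oblique projection onto $W$ along $V^\perp$, and $\boldsymbol{\pi}_{VW^\perp}$ the oblique projection onto $V$ along $W^\perp$ (note $\mathbb{R}^n=V\oplus W^\perp$ too). For a pushforward, $f_\#\mu(E)=\mu(f^{-1}(E))$. Two probability measures $\mu,\eta$ on $W$ are dual probabilistic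 frames for $W$ if $\mu$ is a probabilistic frame for $W$ and there is a coupling $\gamma\in\Gamma(\mu,\eta)$ with $\int\mathbf{x}\mathbf{y}^td\gamma(\mathbf{x},\mathbf{y})=\mathbf{P}_W$. *)

From HB Require Import structures.
From mathcomp Require Import all_boot all_order all_algebra.
From mathcomp Require Import all_classical all_reals all_analysis.
Set Implicit Arguments. Unset Strict Implicit. Unset Printing Implicit Defensive.
Import Order.TTheory GRing.Theory Num.Theory.
Local Open Scope classical_set_scope.
Local Open Scope ring_scope.

(* The ambient space R^n, represented by row vectors 'rV[R]_n.  Subspaces of
   R^n are represented (as in mxalgebra) by the row space of a square matrix
   W : 'M[R]_n, and membership is (x <= W)%MS. *)
Definition vec (R : realType) (n : nat) : Type := 'rV[R]_n.

HB.instance Definition _ (R : realType) n := Choice.copy (vec R n) ('rV[R]_n).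
HB.instance Definition _ (R : realType) n := isPointed.Build (vec R n) (0 : 'rV[R]_n).

Definition vec_display : measure_display -> measure_display.
Proof. exact. Qed.

(* The Borel sigma-algebra of R^n = the sigma-algebra generated by the
   coordinate functions. *)
Section vec_measurable.
Variables (R : realType) (n : nat).
Let coor : 'I_n -> vec R n -> R := fun i x => x ord0 i.
Let vec_set0 : g_sigma_preimage coor set0.
Proof. exact: sigma_algebra0. Qed.
Let vec_setC A : g_sigma_preimage coor A -> g_sigma_preimage coor (~` A).
Proof. exact: sigma_algebraC. Qed.
Let vec_bigcup (F : _^nat) : (forall i, g_sigma_preimage coor (F i)) ->
  g_sigma_preimage coor (\bigcup_i (F i)).
Proof. exact: sigma_algebra_bigcup. Qed.
HB.instance Definition _ := @isMeasurable.Build (vec_display default_measure_display)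
  (vec R n) (g_sigma_preimage coor) vec_set0 vec_setC vec_bigcup.
End vec_measurable.

Definition dotv (R : realType) n (x y : 'rV[R]_n) : R := (x *m y^T) ord0 ord0.
Definition sqnorm (R : realType) n (x : 'rV[R]_n) : R := dotv x x.

Definition orthmx (R : realType) n (W : 'M[R]_n) : 'M[R]_n := kermx W^T.

(* Orthogonal projection P_W, and oblique projection pi_{W V^perp}
   onto W along V^perp (acting on row vectors by right multiplication). *)
Definition orth_proj (R : realType) n (W : 'M[R]_n) : 'M[R]_n :=
  proj_mx W (orthmx W).
Definition obl_proj (R : realType) n (W V : 'M[R]_n) : 'M[R]_n :=
  proj_mx W (orthmx V).

Section frames.
Variables (R : realType) (n : nat).
Local Notation V := (vec R n).
Local Notation dsp := (vec_display default_measure_display).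

Definition concentrated_on (mu : set V -> \bar R) (W : 'M[R]_n) : Prop :=
  exists2 A : set V, measurable A /\ A `<=` [set x | (x <= W)%MS] & mu A = 1%E.

Definition in_P2 (mu : probability V R) (W : 'M[R]_n) : Prop :=
  concentrated_on mu W /\
  (\int[mu]_(x in setT) (sqnorm x)%:E < +oo)%E.

Definition bessel (mu : probability V R) (W : 'M[R]_n) (B : R) : Prop :=
  in_P2 mu W /\
  forall x : 'rV[R]_n, (x <= W)%MS ->
    (\int[mu]_(y in setT) ((dotv x y) ^+ 2)%:E <= (B * sqnorm x)%:E)%E.

(* The side condition A <= B of
   the paper is omitted: it follows from the two inequalities whenever W <> 0,
   and would make the statement false in the degenerate case W = 0. *)
Definition prob_frame (mu : probability V R) (W : 'M[R]_n) (A B : R) : Prop :=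
  0 < A /\ bessel mu W B /\
  forall x : 'rV[R]_n, (x <= W)%MS ->
    ((A * sqnorm x)%:E <= \int[mu]_(y in setT) ((dotv x y) ^+ 2)%:E)%E.

Definition coupling (gamma : probability (V * V)%type R)
    (mu eta : set V -> \bar R) : Prop :=
  (forall A : set V, measurable A -> gamma (fst @^-1` A) = mu A) /\
  (forall A : set V, measurable A -> gamma (snd @^-1` A) = eta A).

Definition dual_frames (mu eta : probability V R)
    (W : 'M[R]_n) : Prop :=
  (exists A B, prob_frame mu W A B) /\ concentrated_on eta W /\
  exists gamma : probability (V * V)%type R,
    coupling gamma mu eta /\
    forall i j : 'I_n,
      (\int[gamma]_(p in setT) ((p.1 : 'rV[R]_n) ord0 i * (p.2 : 'rV[R]_n) ord0 j)%:E
       = (orth_proj W i j)%:E)%E.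

Definition is_pushforward (eta : set V -> \bar R) (mu : set V -> \bar R)
    (f : V -> V) : Prop :=
  forall A : set V, measurable A -> eta A = mu (f @^-1` A).

End frames.

From HB Require Import structures.
From mathcomp Require Import all_boot all_order all_algebra.
From mathcomp Require Import all_classical all_reals all_analysis.
From mathcomp Require Import measurable_realfun zify ring lra.
Set Implicit Arguments. Unset Strict Implicit. Unset Printing Implicit Defensive.
Import Order.TTheory GRing.Theory Num.Theory.
Local Open Scope classical_set_scope.
Local Open Scope ring_scope.

(* Every condition is a statement about the cross-moment matrix
   M = \int x^T y dgamma, which is finite because mu and nu have second
   moments: (2) and (4) say M^T = pi_{W V^perp}, (3) and (5) say
   M = pi_{V W^perp}, and these agree because the two oblique projections
   are adjoint.  Condition (1) only says that M^T fixes W, but M^T also kills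
   V^perp since nu lives on V, and that pins M^T down.
   For x in W, |x|^2 = <x M, x> = \int <x, y1> <x, y2> dgamma, and AM-GM with
   weight B_nu against the Bessel bound of nu gives |x|^2 <= B_nu \int <x, y>^2
   dmu, the lower frame bound; symmetrically for nu.  Pushing gamma forward by
   id x P_W (resp. P_V x id) gives a coupling whose cross moment M P_W = P_W
   (resp. P_V M = P_V) exhibits the dual frames. *)

Section inner_product.
Variables (R : realType) (n : nat).
Implicit Types (a b x y f u : 'rV[R]_n) (A B U V W X Y : 'M[R]_n).

Lemma dotvE x y : dotv x y = \sum_k x ord0 k * y ord0 k.
Proof. by rewrite /dotv mxE; apply: eq_bigr => k _; rewrite mxE. Qed.

Lemma dotvC x y : dotv x y = dotv y x.
Proof. by rewrite !dotvE; apply: eq_bigr => k _; rewrite mulrC. Qed.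

Lemma dotvDl x y f : dotv (x + y) f = dotv x f + dotv y f.
Proof. by rewrite !dotvE -big_split; apply: eq_bigr => k _; rewrite mxE mulrDl. Qed.

Lemma dotvDr x y f : dotv f (x + y) = dotv f x + dotv f y.
Proof. by rewrite dotvC dotvDl !(dotvC f). Qed.

Lemma dotv_mul_expand x y a b : dotv x a * dotv y b =
  \sum_i \sum_j a ord0 i * b ord0 j * (x ord0 i * y ord0 j).
Proof.
rewrite !dotvE mulr_suml; apply: eq_bigr => i _.
by rewrite mulr_sumr; apply: eq_bigr => j _; ring.
Qed.

Lemma dotv_mulmx x y A : dotv (x *m A) y = dotv x (y *m A^T).
Proof. by rewrite /dotv trmx_mul trmxK mulmxA. Qed.

Lemma dotv_delta x i : dotv x (delta_mx 0 i) = x ord0 i.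
Proof.
rewrite dotvE (bigD1 i) //= mxE !eqxx mulr1 big1 ?addr0 // => k ki.
by rewrite mxE (negbTE ki) andbF mulr0.
Qed.

Lemma coord_mulmx x A i : (x *m A) ord0 i = dotv x (delta_mx 0 i *m A^T).
Proof. by rewrite -dotv_mulmx dotv_delta. Qed.

Lemma sqnorm_ge0 x : 0 <= sqnorm x.
Proof. by rewrite /sqnorm dotvE sumr_ge0 // => k _; rewrite -expr2 sqr_ge0. Qed.

Lemma sqr_coord_le_sqnorm x i : x ord0 i ^+ 2 <= sqnorm x.
Proof.
rewrite /sqnorm dotvE (bigD1 i) //= -expr2 lerDl sumr_ge0 // => k _.
by rewrite -expr2 sqr_ge0.
Qed.

Lemma sqnorm_eq0 x : sqnorm x = 0 -> x = 0.
Proof.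
rewrite /sqnorm dotvE => /eqP; rewrite psumr_eq0 => [/allP x0|k _]; last first.
  by rewrite -expr2 sqr_ge0.
by apply/rowP => k; rewrite mxE; have /x0 := mem_index_enum k; rewrite mulf_eq0 orbb => /eqP.
Qed.

Lemma dotv_orthmx {x y U} : (x <= U)%MS -> (y <= orthmx U)%MS -> dotv x y = 0.
Proof.
move=> /submxP[D ->] /sub_kermxP yU.
by rewrite /dotv -mulmxA -[U *m y^T]trmxK trmx_mul trmxK yU trmx0 mulmx0 mxE.
Qed.

Lemma eq_mx_dotv A B :
  (forall x y, dotv (x *m A) y = dotv (x *m B) y) -> A = B.
Proof.
move=> AB; apply/matrixP => i j.
by have := AB (delta_mx 0 i) (delta_mx 0 j); rewrite !dotv_delta -!rowE !mxE.
Qed.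

Lemma proj_mx_compl_sub1 {m U X} (x : 'M[R]_(m, n)) : (1%:M <= U + X)%MS ->
  (x - x *m proj_mx U X <= X)%MS.
Proof. by move=> UX; apply/proj_mx_compl_sub/(submx_trans (submx1 x)). Qed.

Lemma orthmx_cap U : (U :&: orthmx U = 0)%MS.
Proof.
apply/eqP/rowV0P => x; rewrite sub_capmx => /andP[xU xUo].
by apply: sqnorm_eq0; apply: dotv_orthmx xU xUo.
Qed.

Lemma rank_orthmx U : \rank (orthmx U) = (n - \rank U)%N.
Proof. by rewrite mxrank_ker mxrank_tr. Qed.

Lemma orthmx_full U : (1%:M <= U + orthmx U)%MS.
Proof.
rewrite sub1mx /row_full mxrank_disjoint_sum ?orthmx_cap // rank_orthmx.
by rewrite subnKC ?rank_leq_col.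
Qed.

Lemma orthmx_compl_sym {W V} : (1%:M <= W + orthmx V)%MS -> (W :&: orthmx V = 0)%MS ->
  (1%:M <= V + orthmx W)%MS /\ (V :&: orthmx W = 0)%MS.
Proof.
move=> WVo capWVo; have capVWo : (V :&: orthmx W = 0)%MS.
  apply/eqP/rowV0P => x; rewrite sub_capmx => /andP[xV xWo]; apply: sqnorm_eq0.
  rewrite /sqnorm -{1}(add_proj_mx capWVo (submx_trans (submx1 x) WVo)) dotvDl.
  rewrite (dotv_orthmx (proj_mx_sub _ _ _) xWo) add0r.
  by rewrite dotvC (dotv_orthmx xV (proj_mx_sub _ _ _)).
split=> //; move: WVo; rewrite !sub1mx /row_full !mxrank_disjoint_sum //.
rewrite !rank_orthmx; have := rank_leq_col V; have := rank_leq_col W; lia.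
Qed.

Lemma proj_mx_uniq U X A : (1%:M <= U + X)%MS -> (U :&: X = 0)%MS ->
  (forall f, (f <= U)%MS -> f *m A = f) -> (forall u, (u <= X)%MS -> u *m A = 0) ->
  A = proj_mx U X.
Proof.
move=> UX capUX idU killX; apply/row_matrixP => i; rewrite !rowE.
have fUX := submx_trans (submx1 (delta_mx 0 i : 'rV_n)) UX.
rewrite -{1}(add_proj_mx capUX fUX) mulmxDl idU ?proj_mx_sub //.
by rewrite killX ?proj_mx_sub // addr0.
Qed.

Lemma trmx_obl_proj W V : (1%:M <= W + orthmx V)%MS -> (W :&: orthmx V = 0)%MS ->
  (obl_proj W V)^T = obl_proj V W.
Proof.
move=> WVo capWVo; have [VWo capVWo] := orthmx_compl_sym WVo capWVo.
set P := obl_proj W V.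
have VP : V *m P^T = V.
  have /sub_kermxP := proj_mx_compl_sub1 (1%:M : 'M[R]_n) WVo.
  rewrite mul1mx mulmxBl mul1mx => /eqP; rewrite subr_eq0 => /eqP VtP.
  by rewrite -[V]trmxK -trmx_mul -VtP.
have [D PE] : exists D, P = D *m W.
  by apply/submxP; rewrite -[P]mul1mx proj_mx_sub.
apply: proj_mx_uniq => // [f /submxP[c ->] | u /sub_kermxP uW].
  by rewrite -mulmxA VP.
by rewrite PE trmx_mul mulmxA uW mul0mx.
Qed.

Lemma trmx_eq_obl_proj W V A : (1%:M <= W + orthmx V)%MS -> (W :&: orthmx V = 0)%MS ->
  A^T = obl_proj W V <-> A = obl_proj V W.
Proof.
move=> WVo capWVo; rewrite -(trmx_obl_proj WVo capWVo).
by split=> [/(congr1 trmx)|->]; rewrite !trmxK.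
Qed.

Lemma trmx_orth_proj U : (orth_proj U)^T = orth_proj U.
Proof. exact: trmx_obl_proj (orthmx_full U) (orthmx_cap U). Qed.

Lemma mul_proj_mx_same_compl U Y X : (1%:M <= U + X)%MS -> (Y :&: X = 0)%MS ->
  proj_mx U X *m proj_mx Y X = proj_mx Y X.
Proof.
move=> UX capYX; have := proj_mx_0 capYX (proj_mx_compl_sub1 (1%:M : 'M[R]_n) UX).
by rewrite mul1mx mulmxBl mul1mx => /eqP; rewrite subr_eq0 eq_sym => /eqP.
Qed.

Lemma dotv_orth_proj U x y : (y <= U)%MS -> dotv (x *m orth_proj U) y = dotv x y.
Proof.
move=> yU; rewrite -[in RHS](subrK (x *m orth_proj U) x) dotvDl [dotv (x - _) y]dotvC.
by rewrite (dotv_orthmx yU (proj_mx_compl_sub1 x (orthmx_full U))) add0r.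
Qed.

Lemma sqnorm_orth_proj_le U x : sqnorm (x *m orth_proj U) <= sqnorm x.
Proof.
set y := x *m orth_proj U; set z := x - y.
have yz : dotv y z = 0.
  exact: dotv_orthmx (proj_mx_sub _ _ _) (proj_mx_compl_sub1 _ (orthmx_full U)).
have xE : x = z + y by rewrite subrK.
rewrite /sqnorm xE; clearbody y z.
rewrite dotvDl !dotvDr yz (dotvC z y) yz addr0 add0r.
by rewrite lerDr; apply: sqnorm_ge0.
Qed.

End inner_product.

Lemma mul_le_amgm (R : realFieldType) (t u v : R) : 0 < t ->
  u * v <= t / 2 * u ^+ 2 + t^-1 / 2 * v ^+ 2.
Proof.
move=> t0; rewrite -subr_ge0.
have : 0 <= (2 * t)^-1 * (t * u - v) ^+ 2 by rewrite mulr_ge0 ?sqr_ge0 // invr_ge0 mulr_ge0 // ltW.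
by congr (_ <= _); field; rewrite gt_eqF.
Qed.

Lemma abs_mul_le_sqr (R : realFieldType) (u v : R) : `|u * v| <= u ^+ 2 + v ^+ 2.
Proof. rewrite ler_norml; apply/andP; split; nra. Qed.

Lemma lee_amgm_cancel (R : realType) (s B : R) (I J : \bar R) : 0 < B ->
  (0 <= I)%E -> (0 <= J)%E -> (J <= (B * s)%:E)%E ->
  (s%:E <= (B / 2)%:E * I + (B^-1 / 2)%:E * J)%E -> ((B^-1 * s)%:E <= I)%E.
Proof.
move=> B0; case: I => [r| |] //= r0; last by rewrite leey.
case: J => [q| |] //= q0 qBs; rewrite -!EFinM -EFinD !lee_fin in qBs *.
move=> amgm; have Bi0 : 0 < B^-1 / 2 by rewrite divr_gt0 ?invr_gt0.
have : B^-1 / 2 * q <= B^-1 / 2 * (B * s) by rewrite ler_pM2l.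
have -> : B^-1 / 2 * (B * s) = s / 2 by field; rewrite gt_eqF.
move=> qs; have sBr : s <= B * r by lra.
by rewrite ler_pdivrMl // mulrC.
Qed.

Section vec_measurable_fun.
Variables (R : realType) (n : nat).
Local Notation vec := (vec R n).

Lemma measurable_coord (i : 'I_n) : measurable_fun setT (fun x : vec => x ord0 i).
Proof.
move=> _ Y mY; rewrite setTI; apply: sub_sigma_algebra.
rewrite -bigcup_seq; exists i; first by rewrite /= mem_index_enum.
by exists Y => //; rewrite setTI.
Qed.

Lemma measurable_vec d (T : measurableType d) (h : T -> vec) :
  (forall i, measurable_fun setT (fun t => h t ord0 i)) -> measurable_fun setT h.
Proof.
move=> mh _ A mA; rewrite setTI.
have : g_sigma_preimage (fun i => (fun x : vec => x ord0 i) \o h) `<=` measurable.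
  apply: smallest_sub; first exact: sigma_algebra_measurable.
  case: n => [|m] in h mh A mA *; first by rewrite big_ord0.
  rewrite -bigcup_mkord_ord; apply: bigcup_sub => i _.
  by move=> B [C mC <-]; exact: mh.
by rewrite g_sigma_preimage_comp; apply; exists A => //; rewrite setTI.
Qed.

Lemma measurable_dotv d (T : measurableType d) (h1 h2 : T -> vec) :
  measurable_fun setT h1 -> measurable_fun setT h2 ->
  measurable_fun setT (fun t => dotv (h1 t) (h2 t)).
Proof.
move=> m1 m2; under eq_fun do rewrite dotvE.
apply: measurable_sum => k; apply: measurable_funM.
- exact: measurableT_comp (measurable_coord k) m1.
- exact: measurableT_comp (measurable_coord k) m2.
Qed.

Lemma measurable_mulmx d (T : measurableType d) (h : T -> vec) (A : 'M[R]_n) :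
  measurable_fun setT h -> measurable_fun setT (fun t => (h t *m A : vec)).
Proof.
move=> mh; apply: measurable_vec => i; under eq_fun do rewrite mxE.
apply: measurable_sum => k; apply: measurable_funM => //.
exact: measurableT_comp (measurable_coord k) mh.
Qed.

Lemma measurable_submx (U : 'M[R]_n) : measurable [set x : vec | (x <= U)%MS].
Proof.
pose g (x : vec) := sqnorm (x *m cokermx U).
have mg : measurable_fun setT g by apply: measurable_dotv; apply: measurable_mulmx.
have -> : [set x : vec | (x <= U)%MS] = setT `&` g @^-1` [set 0].
  apply/seteqP; split => x /=; rewrite submxE.
    by move=> /eqP x0; rewrite /g x0 /sqnorm /dotv mul0mx mxE.
  by move=> [_ /sqnorm_eq0 ->].
exact: mg.
Qed.

End vec_measurable_fun.

Section image_measure.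
Local Open Scope ereal_scope.
Variables (R : realType) (d d' : measure_display).
Variables (T : measurableType d) (T' : measurableType d').
Variables (P : {measure set T -> \bar R}) (eta : {measure set T' -> \bar R}) (h : T -> T').
Hypothesis mh : measurable_fun setT h.
Hypothesis eta_image : forall A, measurable A -> eta A = P (h @^-1` A).

Lemma ge0_integral_image (g : T' -> R) :
  measurable_fun setT g -> (forall y, (0 <= g y)%R) ->
  \int[eta]_(y in setT) (g y)%:E = \int[P]_(x in setT) (g (h x))%:E.
Proof.
move=> mg g0; rewrite (eq_measure_integral (pushforward P h)) => [|A mA _].
  by rewrite ge0_integral_pushforward //; [exact/measurable_EFinP | move=> y _; rewrite lee_fin].
by rewrite /pushforward eta_image.
Qed.

Lemma integrable_image (g : T' -> R) :
  measurable_fun setT g -> (forall y, (0 <= g y)%R) ->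
  \int[eta]_(y in setT) (g y)%:E < +oo -> P.-integrable setT (fun x => (g (h x))%:E).
Proof.
move=> mg g0 fin; apply/integrableP; split.
  exact/measurable_EFinP/(measurableT_comp mg mh).
under eq_integral do rewrite gee0_abs ?lee_fin //.
by rewrite -ge0_integral_image.
Qed.

End image_measure.

Lemma ae_eq_full_prob (R : realType) d (T : measurableType d) (P : probability T R)
    (S : set T) (f g : T -> \bar R) :
  measurable S -> P S = 1%E -> (forall x, S x -> f x = g x) -> ae_eq P setT f g.
Proof.
move=> mS PS fg; exists (~` S); split; first exact: measurableC.
  by have := probability_setC P mS; rewrite PS subee.
by move=> x /= nfg Sx; apply: nfg => _; exact: fg.
Qed.

Section frame_form.
Variables (R : realType) (n : nat).
Local Notation vec := (vec R n).
Implicit Types (P eta : probability vec R) (U V : 'M[R]_n) (x : 'rV[R]_n).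

Definition frame_form P x : \bar R := \int[P]_(y in setT) ((dotv x y) ^+ 2)%:E.

Lemma measurable_sqr_dotv x : measurable_fun setT (fun y : vec => dotv x y ^+ 2).
Proof. exact/measurable_funX/measurable_dotv. Qed.

Lemma frame_form_ge0 P x : (0 <= frame_form P x)%E.
Proof. by apply: integral_ge0 => y _; rewrite lee_fin sqr_ge0. Qed.

Lemma bessel_le P U B : 0 <= B -> bessel P U B ->
  forall x, (frame_form P x <= (B * sqnorm x)%:E)%E.
Proof.
move=> B0 [[[A [mA AU] PA] _] PB] x; set xU := x *m orth_proj U.
rewrite /frame_form (ae_eq_integral (fun y : vec => ((dotv xU y) ^+ 2)%:E)) //.
- apply: (le_trans (PB xU (proj_mx_sub _ _ _))).
  by rewrite lee_fin ler_wpM2l // sqnorm_orth_proj_le.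
- by apply/measurable_EFinP; exact: measurable_sqr_dotv.
- by apply/measurable_EFinP; exact: measurable_sqr_dotv.
apply: (@ae_eq_full_prob _ _ _ P A) => // y /AU yU.
by rewrite /xU dotv_orth_proj.
Qed.

Section pushforward_orth_proj.
Variables (P eta : probability vec R) (U : 'M[R]_n).
Hypothesis eta_push : is_pushforward eta P (fun x : vec => x *m orth_proj U).

Let measurable_orth_proj : measurable_fun setT (fun x : vec => (x *m orth_proj U : vec)).
Proof. exact: measurable_mulmx. Qed.

Lemma concentrated_on_pushforward_orth_proj : concentrated_on eta U.
Proof.
exists [set x : vec | (x <= U)%MS]; first by split => //; exact: measurable_submx.
rewrite eta_push; last exact: measurable_submx.
suff -> : (fun x : vec => x *m orth_proj U) @^-1` [set x : vec | (x <= U)%MS] = setT.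
  exact: probability_setT.
by apply/seteqP; split => x // _; exact: proj_mx_sub.
Qed.

Lemma frame_form_pushforward_orth_proj x : (x <= U)%MS ->
  frame_form eta x = frame_form P x.
Proof.
move=> xU; rewrite /frame_form (ge0_integral_image measurable_orth_proj eta_push).
- by apply: eq_integral => y _; rewrite dotvC dotv_orth_proj // dotvC.
- exact: measurable_sqr_dotv.
- by move=> y; exact: sqr_ge0.
Qed.

Lemma bessel_pushforward_orth_proj W B : 0 <= B -> bessel P W B -> bessel eta U B.
Proof.
move=> B0 PWB; have [[_ P2] _] := PWB.
split=> [|x xU]; last first.
  by rewrite -/(frame_form _ _) frame_form_pushforward_orth_proj //; exact: bessel_le B0 PWB x.
split; first exact: concentrated_on_pushforward_orth_proj.
have msqnorm : measurable_fun setT (fun x : vec => sqnorm x) by exact: measurable_dotv.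
rewrite (ge0_integral_image measurable_orth_proj eta_push msqnorm); last exact: sqnorm_ge0.
apply: le_lt_trans P2; apply: ge0_le_integral => //.
- by move=> y _; rewrite lee_fin sqnorm_ge0.
- exact/measurable_EFinP/(measurableT_comp msqnorm).
- exact/measurable_EFinP.
by move=> y _; rewrite lee_fin sqnorm_orth_proj_le.
Qed.

Lemma prob_frame_pushforward_orth_proj W A B : 0 < A -> 0 <= B -> bessel P W B ->
  (forall x, (x <= U)%MS -> ((A * sqnorm x)%:E <= frame_form P x)%E) ->
  prob_frame eta U A B.
Proof.
move=> A0 B0 PWB lowP; split=> //; split; first exact: bessel_pushforward_orth_proj PWB.
by move=> x xU; rewrite -/(frame_form _ _) frame_form_pushforward_orth_proj // lowP.
Qed.

End pushforward_orth_proj.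
End frame_form.

Definition mulmx_pair (R : realType) n (A B : 'M[R]_n) (p : vec R n * vec R n) :
  vec R n * vec R n := (p.1 *m A, p.2 *m B).

Lemma measurable_mulmx_pair (R : realType) n (A B : 'M[R]_n) :
  measurable_fun setT (mulmx_pair A B).
Proof.
by apply: measurable_fun_pair; apply: measurable_mulmx;
  [exact: measurable_fst | exact: measurable_snd].
Qed.

HB.instance Definition _ (R : realType) n (A B : 'M[R]_n) :=
  isMeasurableFun.Build _ _ _ _ (mulmx_pair A B) (measurable_mulmx_pair A B).

Lemma is_pushforward_mulmx1 (R : realType) n (P : probability (vec R n) R) :
  is_pushforward P P (fun x : vec R n => x *m 1%:M).
Proof.
by move=> A _; congr (P _); apply/seteqP; split => x /=; rewrite mulmx1.
Qed.

Section cross_moment.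
Variables (R : realType) (n : nat).
Local Notation vec := (vec R n).
Variables (mu nu : probability vec R) (gamma : probability (vec * vec)%type R).
Implicit Types (a b f g u x : 'rV[R]_n) (U V W X : 'M[R]_n) (eta : probability vec R).

(* Meaningful only when the entries are integrable: [fine] sends +-oo to 0. *)
Definition cross_moment : 'M[R]_n :=
  \matrix_(i, j) fine (\int[gamma]_(p in setT) (p.1 ord0 i * p.2 ord0 j)%:E)%E.

Hypothesis gamma_coupling : coupling gamma mu nu.
Hypothesis mu_moment : (\int[mu]_(x in setT) (sqnorm x)%:E < +oo)%E.
Hypothesis nu_moment : (\int[nu]_(x in setT) (sqnorm x)%:E < +oo)%E.

Let mu_image A : measurable A -> mu A = gamma (fst @^-1` A).
Proof. by move=> mA; rewrite gamma_coupling.1. Qed.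

Let nu_image A : measurable A -> nu A = gamma (snd @^-1` A).
Proof. by move=> mA; rewrite gamma_coupling.2. Qed.

Let measurable_sqnorm : measurable_fun setT (fun x : vec => sqnorm x).
Proof. exact: measurable_dotv. Qed.

Lemma integrable_coord_mul i j :
  gamma.-integrable setT (fun p => (p.1 ord0 i * p.2 ord0 j)%:E).
Proof.
have int_fst := integrable_image measurable_fst mu_image measurable_sqnorm
  (@sqnorm_ge0 _ _) mu_moment.
have int_snd := integrable_image measurable_snd nu_image measurable_sqnorm
  (@sqnorm_ge0 _ _) nu_moment.
apply: le_integrable (integrableD _ int_fst int_snd) => //.
  apply/measurable_EFinP; apply: measurable_funM.
    exact: measurableT_comp (measurable_coord _) measurable_fst.
  exact: measurableT_comp (measurable_coord _) measurable_snd.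
move=> p _; rewrite /= lee_fin [X in _ <= X]ger0_norm ?addr_ge0 ?sqnorm_ge0 //.
apply: (le_trans (abs_mul_le_sqr _ _)).
by apply: lerD; apply: sqr_coord_le_sqnorm.
Qed.

Let EFin_dotv_mul a b (p : vec * vec) : (dotv p.1 a * dotv p.2 b)%:E =
  (\sum_i \sum_j (a ord0 i * b ord0 j * (p.1 ord0 i * p.2 ord0 j))%:E)%E.
Proof. by rewrite dotv_mul_expand -sumEFin; under eq_bigr do rewrite -sumEFin. Qed.

Let integrable_term a b i j : gamma.-integrable setT
  (fun p : vec * vec => (a ord0 i * b ord0 j * (p.1 ord0 i * p.2 ord0 j))%:E).
Proof.
by under eq_fun do rewrite EFinM; apply: integrableZl => //; exact: integrable_coord_mul.
Qed.

Lemma integrable_dotv_mul a b :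
  gamma.-integrable setT (fun p : vec * vec => (dotv p.1 a * dotv p.2 b)%:E).
Proof.
under eq_fun do rewrite EFin_dotv_mul.
by apply: integrable_sum => // i _; apply: integrable_sum => // j _; exact: integrable_term.
Qed.

Lemma integral_dotv_mul a b :
  (\int[gamma]_(p in setT) (dotv p.1 a * dotv p.2 b)%:E)%E =
  (dotv (a *m cross_moment) b)%:E.
Proof.
under eq_integral do rewrite EFin_dotv_mul.
rewrite integral_sum // => [|i]; last first.
  by apply: integrable_sum => // j _; exact: integrable_term.
have -> : dotv (a *m cross_moment) b =
    \sum_i \sum_j a ord0 i * b ord0 j * cross_moment i j.
  rewrite dotvE exchange_big; apply: eq_bigr => j _; rewrite mxE mulr_suml.
  by apply: eq_bigr => i _; ring.
rewrite -sumEFin; apply: eq_bigr => i _.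
rewrite integral_sum // -sumEFin; apply: eq_bigr => j _.
under eq_integral do rewrite EFinM.
rewrite integralZl ?integrable_coord_mul // !mxE [RHS]EFinM fineK //.
exact/integrable_fin_num/integrable_coord_mul.
Qed.

Lemma integral_coord_dotv f i :
  (\int[gamma]_(p in setT) (p.1 ord0 i * dotv p.2 f)%:E)%E =
  ((f *m cross_moment^T) ord0 i)%:E.
Proof.
under eq_integral => p _ do rewrite -(dotv_delta p.1 i).
by rewrite integral_dotv_mul dotv_mulmx dotvC dotv_delta.
Qed.

Lemma integral_dotv_coord f i :
  (\int[gamma]_(p in setT) (dotv p.1 f * p.2 ord0 i)%:E)%E =
  ((f *m cross_moment) ord0 i)%:E.
Proof.
under eq_integral => p _ do rewrite -(dotv_delta p.2 i).
by rewrite integral_dotv_mul dotv_delta.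
Qed.

Lemma cross_moment_orthmx V u : concentrated_on nu V -> (u <= orthmx V)%MS ->
  u *m cross_moment^T = 0.
Proof.
move=> [A [mA AV] nuA] uV; apply/rowP => i; rewrite [RHS]mxE; apply: EFin_inj.
rewrite -integral_coord_dotv (ae_eq_integral (cst 0%E)) ?integral0 //.
- apply/measurable_EFinP; apply: measurable_funM.
    exact: measurableT_comp (measurable_coord _) measurable_fst.
  exact: measurable_dotv.
- apply: (@ae_eq_full_prob _ _ _ gamma (snd @^-1` A)) => [||p /AV pV].
  + by rewrite -[X in measurable X]setTI; exact: measurable_snd.
  + by rewrite -nu_image.
  + by rewrite /= (dotv_orthmx pV uV) mulr0.
Qed.

Lemma cross_moment_amgm a b t : 0 < t ->
  ((dotv (a *m cross_moment) b)%:E <=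
   (t / 2)%:E * frame_form mu a + (t^-1 / 2)%:E * frame_form nu b)%E.
Proof.
move=> t0; have t2 : 0 <= t / 2 by rewrite divr_ge0 // ltW.
have ti2 : 0 <= t^-1 / 2 by rewrite divr_ge0 // invr_ge0 ltW.
have ma : measurable_fun setT (fun p : vec * vec => dotv a p.1 ^+ 2).
  exact: measurableT_comp (measurable_sqr_dotv a) measurable_fst.
have mb : measurable_fun setT (fun p : vec * vec => dotv b p.2 ^+ 2).
  exact: measurableT_comp (measurable_sqr_dotv b) measurable_snd.
have -> : ((t / 2)%:E * frame_form mu a + (t^-1 / 2)%:E * frame_form nu b)%E =
    (\int[gamma]_(p in setT) (t / 2 * dotv a p.1 ^+ 2 + t^-1 / 2 * dotv b p.2 ^+ 2)%:E)%E.
  under eq_integral do rewrite EFinD (EFinM (t / 2)) (EFinM (t^-1 / 2)).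
  rewrite ge0_integralD //; first last.
  - by apply: emeasurable_funM => //; exact/measurable_EFinP.
  - by move=> p _; rewrite -EFinM lee_fin mulr_ge0 ?sqr_ge0.
  - by apply: emeasurable_funM => //; exact/measurable_EFinP.
  - by move=> p _; rewrite -EFinM lee_fin mulr_ge0 ?sqr_ge0.
  rewrite !ge0_integralZl_EFin //; first last.
  - exact/measurable_EFinP.
  - by move=> p _; rewrite lee_fin sqr_ge0.
  - exact/measurable_EFinP.
  - by move=> p _; rewrite lee_fin sqr_ge0.
  rewrite /frame_form (ge0_integral_image measurable_fst mu_image (measurable_sqr_dotv a)).
    by rewrite (ge0_integral_image measurable_snd nu_image (measurable_sqr_dotv b)) // => y;
      exact: sqr_ge0.
  by move=> y; exact: sqr_ge0.
have mab : measurable_fun setT (fun p : vec * vec => (dotv p.1 a * dotv p.2 b)%:E).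
  by apply/measurable_EFinP; apply: measurable_funM; exact: measurable_dotv.
rewrite -integral_dotv_mul; apply: (le_trans (lee_abs _)).
apply: (le_trans (le_abse_integral _ _ mab)) => //.
apply: ge0_le_integral => //.
- apply: measurableT_comp => //.
- by apply/measurable_EFinP; apply: measurable_funD; apply: measurable_funM.
move=> p _; rewrite /= lee_fin normrM (dotvC p.1) (dotvC p.2).
by rewrite -(real_normK (num_real (dotv a p.1))) -(real_normK (num_real (dotv b p.2))) mul_le_amgm.
Qed.

Lemma frame_lower_bound_fst V x B : 0 < B -> bessel nu V B ->
  dotv (x *m cross_moment) x = sqnorm x -> ((B^-1 * sqnorm x)%:E <= frame_form mu x)%E.
Proof.
move=> B0 nuB xMx; apply: lee_amgm_cancel (bessel_le (ltW B0) nuB x) _ => //;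
  rewrite ?frame_form_ge0 //.
by rewrite -[X in X%:E]xMx cross_moment_amgm.
Qed.

Lemma frame_lower_bound_snd W x B : 0 < B -> bessel mu W B ->
  dotv (x *m cross_moment) x = sqnorm x -> ((B^-1 * sqnorm x)%:E <= frame_form nu x)%E.
Proof.
move=> B0 muB xMx; apply: lee_amgm_cancel (bessel_le (ltW B0) muB x) _ => //;
  rewrite ?frame_form_ge0 //.
have := @cross_moment_amgm x x B^-1; rewrite invr_gt0 invrK xMx addeC; exact.
Qed.

Lemma reconstruction_subspaceP U :
  (forall f, (f <= U)%MS -> forall i, (f ord0 i)%:E =
     (\int[gamma]_(p in setT) (p.1 ord0 i * dotv p.2 f)%:E)%E) <->
  (forall f, (f <= U)%MS -> f *m cross_moment^T = f).
Proof.
split=> rec f fU; last by move=> i; rewrite integral_coord_dotv rec.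
by apply/rowP => i; apply: EFin_inj; rewrite (rec f fU) integral_coord_dotv.
Qed.

Lemma reconstruction_fstP X :
  (forall f i, ((f *m X) ord0 i)%:E =
     (\int[gamma]_(p in setT) (p.1 ord0 i * dotv p.2 f)%:E)%E) <->
  cross_moment^T = X.
Proof.
split=> [rec | <- f i]; last by rewrite integral_coord_dotv.
apply/row_matrixP => i; apply/rowP => j; apply: EFin_inj.
by rewrite !rowE rec integral_coord_dotv.
Qed.

Lemma reconstruction_sndP X :
  (forall f i, ((f *m X) ord0 i)%:E =
     (\int[gamma]_(p in setT) (dotv p.1 f * p.2 ord0 i)%:E)%E) <->
  cross_moment = X.
Proof.
split=> [rec | <- f i]; last by rewrite integral_dotv_coord.
apply/row_matrixP => i; apply/rowP => j; apply: EFin_inj.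
by rewrite !rowE rec integral_dotv_coord.
Qed.

Lemma weak_reconstruction_fstP X :
  (forall f g, (dotv (f *m X) g)%:E =
     (\int[gamma]_(p in setT) (dotv p.1 g * dotv p.2 f)%:E)%E) <->
  cross_moment^T = X.
Proof.
split=> [rec | <- f g]; last by rewrite integral_dotv_mul [in RHS]dotv_mulmx [in RHS]dotvC.
apply: eq_mx_dotv => f g; apply: EFin_inj.
by rewrite rec integral_dotv_mul [in RHS]dotv_mulmx [in RHS]dotvC.
Qed.

Lemma weak_reconstruction_sndP X :
  (forall f g, (dotv (f *m X) g)%:E =
     (\int[gamma]_(p in setT) (dotv p.1 f * dotv p.2 g)%:E)%E) <->
  cross_moment = X.
Proof.
split=> [rec | <- f g]; last by rewrite integral_dotv_mul.
by apply: eq_mx_dotv => f g; apply: EFin_inj; rewrite rec integral_dotv_mul.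
Qed.

Lemma cross_moment_obl_projP W V :
  (1%:M <= W + orthmx V)%MS -> (W :&: orthmx V = 0)%MS -> concentrated_on nu V ->
  (forall f, (f <= W)%MS -> f *m cross_moment^T = f) <-> cross_moment^T = obl_proj W V.
Proof.
move=> WVo capWVo nuV; split=> [fixW | -> f]; last exact: proj_mx_id.
by apply: proj_mx_uniq => // u; exact: cross_moment_orthmx.
Qed.

Lemma coupling_mulmx_pair (A B : 'M[R]_n) (eta1 eta2 : probability vec R) :
  is_pushforward eta1 mu (fun x : vec => x *m A) ->
  is_pushforward eta2 nu (fun x : vec => x *m B) ->
  coupling (distribution gamma (mulmx_pair A B)) eta1 eta2.
Proof.
have mpre (C : 'M[R]_n) (S : set vec) :
    measurable S -> measurable ((fun x : vec => x *m C : vec) @^-1` S).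
  by move=> mS; rewrite -[X in measurable X]setTI; apply: measurable_mulmx.
move=> eta1E eta2E; split => S mS; rewrite /distribution /pushforward.
  by rewrite eta1E // -gamma_coupling.1 //; exact: mpre.
by rewrite eta2E // -gamma_coupling.2 //; exact: mpre.
Qed.

Lemma integral_coord_mul_mulmx_pair (A B : 'M[R]_n) i j :
  (\int[distribution gamma (mulmx_pair A B)]_(p in setT) (p.1 ord0 i * p.2 ord0 j)%:E)%E =
  ((A^T *m cross_moment *m B) i j)%:E.
Proof.
rewrite integral_distribution //=.
- under eq_integral do rewrite /= !coord_mulmx.
  rewrite integral_dotv_mul -dotv_mulmx dotv_delta.
  by rewrite -2!mulmxA -rowE mxE !mulmxA.
- apply/measurable_EFinP; apply: measurable_funM.
    exact: measurableT_comp (measurable_coord _) measurable_fst.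
  exact: measurableT_comp (measurable_coord _) measurable_snd.
apply: eq_integrable (integrable_dotv_mul _ _) => // p _.
by rewrite /= !coord_mulmx.
Qed.

Section oblique_dual.
Variables (W V : 'M[R]_n) (Bmu Bnu : R).
Hypotheses (WVo : (1%:M <= W + orthmx V)%MS) (capWVo : (W :&: orthmx V = 0)%MS).
Hypotheses (Bmu0 : 0 < Bmu) (Bnu0 : 0 < Bnu).
Hypotheses (muW : bessel mu W Bmu) (nuV : bessel nu V Bnu).
Hypothesis cross_momentT : cross_moment^T = obl_proj W V.

Let VWo : (1%:M <= V + orthmx W)%MS := (orthmx_compl_sym WVo capWVo).1.
Let capVWo : (V :&: orthmx W = 0)%MS := (orthmx_compl_sym WVo capWVo).2.

Let cross_momentE : cross_moment = obl_proj V W.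
Proof. exact/(trmx_eq_obl_proj _ WVo capWVo). Qed.

Let fixW x : (x <= W)%MS -> dotv (x *m cross_moment) x = sqnorm x.
Proof. by move=> xW; rewrite dotv_mulmx cross_momentT proj_mx_id // dotvC. Qed.

Let fixV x : (x <= V)%MS -> dotv (x *m cross_moment) x = sqnorm x.
Proof. by move=> xV; rewrite cross_momentE proj_mx_id. Qed.

Let prob_frame_fst : prob_frame mu W Bnu^-1 Bmu.
Proof.
split; rewrite ?invr_gt0 //; split=> // x /fixW.
exact: frame_lower_bound_fst Bnu0 nuV.
Qed.

Let prob_frame_snd : prob_frame nu V Bmu^-1 Bnu.
Proof.
split; rewrite ?invr_gt0 //; split=> // x /fixV.
exact: frame_lower_bound_snd Bmu0 muW.
Qed.

Let dual_frames_pushforward_snd eta :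
  is_pushforward eta nu (fun x : vec => x *m orth_proj W) -> dual_frames mu eta W.
Proof.
move=> eta_push; split; first by exists Bnu^-1, Bmu; exact: prob_frame_fst.
split; first exact: concentrated_on_pushforward_orth_proj eta_push.
exists (distribution gamma (mulmx_pair 1%:M (orth_proj W))); split.
  exact: coupling_mulmx_pair (is_pushforward_mulmx1 mu) eta_push.
move=> i j; rewrite integral_coord_mul_mulmx_pair trmx1 mul1mx cross_momentE.
by rewrite /obl_proj /orth_proj mul_proj_mx_same_compl ?orthmx_cap.
Qed.

Let dual_frames_pushforward_fst eta :
  is_pushforward eta mu (fun x : vec => x *m orth_proj V) -> dual_frames eta nu V.
Proof.
move=> eta_push; split.
  exists Bnu^-1, Bmu.
  apply: (prob_frame_pushforward_orth_proj eta_push _ (ltW Bmu0) muW); first by rewrite invr_gt0.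
  by move=> x /fixV; exact: frame_lower_bound_fst Bnu0 nuV.
split; first by case: nuV => -[].
exists (distribution gamma (mulmx_pair (orth_proj V) 1%:M)); split.
  exact: coupling_mulmx_pair eta_push (is_pushforward_mulmx1 nu).
move=> i j; rewrite integral_coord_mul_mulmx_pair mulmx1 trmx_orth_proj cross_momentE.
by rewrite proj_mx_id // -[orth_proj V]mul1mx proj_mx_sub.
Qed.

Lemma oblique_dual_frames :
  [/\ prob_frame mu W Bnu^-1 Bmu, prob_frame nu V Bmu^-1 Bnu,
      forall eta, is_pushforward eta nu (fun x : vec => x *m orth_proj W) ->
        dual_frames mu eta W &
      forall eta, is_pushforward eta mu (fun x : vec => x *m orth_proj V) ->
        dual_frames eta nu V].
Proof.
split; [exact: prob_frame_fst | exact: prob_frame_snd |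
        exact: dual_frames_pushforward_snd | exact: dual_frames_pushforward_fst].
Qed.

End oblique_dual.

End cross_moment.

Theorem lemma4p1 (R : realType) (n : nat) (W V : 'M[R]_n)
    (mu nu : probability (vec R n) R)
    (gamma : probability (vec R n * vec R n)%type R) (Bmu Bnu : R) :
  (* R^n = W (+) V^perp *)
  (W + orthmx V == (1%:M : 'M[R]_n))%MS -> (W :&: orthmx V == (0 : 'M[R]_n))%MS ->
  0 < Bmu -> 0 < Bnu ->
  bessel mu W Bmu -> bessel nu V Bnu ->
  coupling gamma mu nu ->
  let c1 := forall f : 'rV[R]_n, (f <= W)%MS -> forall i : 'I_n,
      (f ord0 i)%:E =
      (\int[gamma]_(p in setT)
         ((p.1 : 'rV[R]_n) ord0 i * dotv (p.2 : 'rV[R]_n) f)%:E)%E in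
  let c2 := forall (f : 'rV[R]_n) (i : 'I_n),
      ((f *m obl_proj W V) ord0 i)%:E =
      (\int[gamma]_(p in setT)
         ((p.1 : 'rV[R]_n) ord0 i * dotv (p.2 : 'rV[R]_n) f)%:E)%E in
  let c3 := forall (f : 'rV[R]_n) (i : 'I_n),
      ((f *m obl_proj V W) ord0 i)%:E =
      (\int[gamma]_(p in setT)
         (dotv (p.1 : 'rV[R]_n) f * (p.2 : 'rV[R]_n) ord0 i)%:E)%E in
  let c4 := forall f g : 'rV[R]_n,
      (dotv (f *m obl_proj W V) g)%:E =
      (\int[gamma]_(p in setT)
         (dotv (p.1 : 'rV[R]_n) g * dotv (p.2 : 'rV[R]_n) f)%:E)%E in
  let c5 := forall f g : 'rV[R]_n,
      (dotv (f *m obl_proj V W) g)%:E =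
      (\int[gamma]_(p in setT)
         (dotv (p.1 : 'rV[R]_n) f * dotv (p.2 : 'rV[R]_n) g)%:E)%E in
  [/\ c1 <-> c2, c1 <-> c3, c1 <-> c4 & c1 <-> c5] /\
  (c1 ->
    [/\ prob_frame mu W Bnu^-1 Bmu,
        prob_frame nu V Bmu^-1 Bnu,
        (forall eta : probability (vec R n) R,
           is_pushforward eta nu (fun x : vec R n => x *m orth_proj W) ->
           dual_frames mu eta W) &
        (forall eta : probability (vec R n) R,
           is_pushforward eta mu (fun x : vec R n => x *m orth_proj V) ->
           dual_frames eta nu V)]).
Proof.
move=> /andP[_ WVo] /andP[+ _]; rewrite submx0 => /eqP capWVo.
move=> Bmu0 Bnu0 bmu bnu cpl c1 c2 c3 c4 c5.
have [[_ mu2] _] := bmu; have [[nuV nu2] _] := bnu.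
have c1P : c1 <-> (cross_moment gamma)^T = obl_proj W V.
  exact: iff_trans (reconstruction_subspaceP cpl mu2 nu2 W)
    (cross_moment_obl_projP cpl mu2 nu2 WVo capWVo nuV).
have c2P : c2 <-> _ := reconstruction_fstP cpl mu2 nu2 (obl_proj W V).
have c3P : c3 <-> _ := reconstruction_sndP cpl mu2 nu2 (obl_proj V W).
have c4P : c4 <-> _ := weak_reconstruction_fstP cpl mu2 nu2 (obl_proj W V).
have c5P : c5 <-> _ := weak_reconstruction_sndP cpl mu2 nu2 (obl_proj V W).
have transposeP := trmx_eq_obl_proj (cross_moment gamma) WVo capWVo.
split; first by split; tauto.
move=> /c1P MP; apply: (oblique_dual_frames cpl mu2 nu2 WVo capWVo Bmu0 Bnu0 bmu bnu MP).
Qed.
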